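(* Let $(I,\preceq)$ be a finite poset; for each $i\in I$ let $X_i$ be a finite set with $|X_i|\ge2$ and $P_i$ a Markov chain on $X_i$, and let $\mathbb{L}_i$ be the set of all partitions of $X_i$ with respect to which $P_i$ is lumpable. Let $\{p_i^0\}_{i\in I}$ be a strict probability measure on $I$ and $\mathcal{P}$ the generalized crested product of the $P_i$ defined by $(I,\preceq)$ and $\{p_i^0\}$. For each $i\in I$ let $\Phi_i:X_{A(i)}\to\mathbb{L}_i$ be a map (when $A(i)=\emptyset$, $X_{A(i)}$ is a one-point set and $\Phi_i$ is a single choice of a partition in $\mathbb L_i$), such that $\Phi_i(x_{A(i)})=\Phi_i(y_{A(i)})$ whenever, for every $j\in A(i)$, $\Phi_j(x_{A(j)})=\Phi_j(y_{A(j)})$ and $x_j,y_j$ lie in the same part of this partition. Let $\mathcal{L}$ be the partition of $X=\prod_{i\in I}X_i$ (the generalized product of lumpings) into the classes of the relation: $x\approx y$ iff for every $i\in I$, $\Phi_i(x_{A(i)})=\Phi_i(y_{A(i)})$ and $x_i,y_i$ lie in the same part of this partition of $X_i$. Then $\mathcal{P}$ is lumpable with respect to $\mathcal{L}$.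
   Context: $A(i)=\{j\in I: j\succ i\}$, $H(i)=\{j\in I:j\prec i\}$, $H[i]=H(i)\sqcup\{i\}$; for $J\subseteq I$, $X_J=\prod_{j\in J}X_j$ and $x_J$ is the projection of $x$ onto $X_J$. The generalized crested product is the chain on $X$ with $p(x,y)=\sum_{i\in I}p_i^0\,p_i(x_i,y_i)\prod_{j\in H(i)}\frac{1}{|X_j|}\prod_{j\notin H[i]}\delta(x_j,y_j)$ ($\delta$ the Kronecker delta, $p_i^0>0$, $\sum_ip_i^0=1$). A chain $p$ is lumpable with respect to a partition if for all parts $L,L'$ the map $x\mapsto\sum_{y\in L'}p(x,y)$ is constant on $L$. *)

From mathcomp Require Import all_boot all_order all_algebra.
Set Implicit Arguments. Unset Strict Implicit. Unset Printing Implicit Defensive.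
Import Order.TTheory GRing.Theory Num.Theory.
Local Open Scope ring_scope.

Definition stochastic (R : numDomainType) (T : finType) (p : T -> T -> R) : Prop :=
  (forall x y, 0 <= p x y) /\ (forall x, \sum_(y : T) p x y = 1).

Definition lumpable (R : numDomainType) (T : finType) (p : T -> T -> R)
  (L : {set {set T}}) : Prop :=
  forall B B', B \in L -> B' \in L -> forall x y, x \in B -> y \in B ->
    \sum_(z in B') p x z = \sum_(z in B') p y z.

Definition is_lumping (R : numDomainType) (T : finType) (p : T -> T -> R)
  (L : {set {set T}}) : Prop :=
  partition L [set: T] /\ lumpable p L.

Definition prodX (I : finType) (X : I -> finType) : finType :=
  {dffun forall i : I, X i}.

Definition sprec (I : finType) (prec : rel I) (j i : I) : bool := prec j i && (j != i).

(* Generalized crested product: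
   p(x,y) = sum_i p0_i P_i(x_i,y_i) prod_{j in H(i)} 1/|X_j| prod_{j notin H[i]} delta(x_j,y_j),
   with H(i) = {j | j < i}, H[i] = {j | j <= i}. *)
Definition crested (R : numFieldType) (I : finType) (prec : rel I) (X : I -> finType)
  (p0 : I -> R) (P : forall i, X i -> X i -> R) (x y : prodX X) : R :=
  \sum_(i : I) (p0 i * P i (x i) (y i)
     * (\prod_(j : I | sprec prec j i) (#|X j|%:R)^-1)
     * (\prod_(j : I | ~~ prec j i) (x j == y j)%:R)).

(* Phi i : X -> {set {set X i}} encodes a map X_{A(i)} -> \mathbb L_i
   (it is required separately to depend only on the coordinates in A(i)). *)
Definition approx (I : finType) (X : I -> finType)
  (Phi : forall i, prodX X -> {set {set X i}}) (x y : prodX X) : bool :=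
  [forall i : I, (Phi i x == Phi i y) && (pblock (Phi i x) (x i) == pblock (Phi i x) (y i))].

Definition prod_lumping (I : finType) (X : I -> finType)
  (Phi : forall i, prodX X -> {set {set X i}}) : {set {set prodX X}} :=
  [set [set y | approx Phi x y] | x : prodX X].

From mathcomp Require Import all_boot all_order all_algebra perm.
Set Implicit Arguments. Unset Strict Implicit. Unset Printing Implicit Defensive.
Import Order.TTheory GRing.Theory Num.Theory.
Local Open Scope ring_scope.

(* Exchanging the sums over the states z and the indices i, the [i]-th
   contribution of [\sum_(z in B') crested x z] is, up to a constant factor,
   the mass that [P i] started at [x i] puts on the states of [B'] that agree
   with [x] outside [H[i]].  Two transpositions of coordinates show that for
   [x \approx y] this mass does not change when [x] is replaced by [y]: first
   on the coordinates outside [H[i]], which only moves states within their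
   class of [\approx]; then on coordinate [i] between two points of one block
   of [Phi i y], after which the lumpability of [P i] concludes. *)

Lemma prodr_natb (R : comPzSemiRingType) (I : finType) (P b : pred I) :
  \prod_(j | P j) ((b j)%:R : R) = ([forall j, P j ==> b j])%:R.
Proof.
case: forallP => [Pb | /forallP/forallPn[j]].
  by rewrite big1 // => j /(implyP (Pb j)) ->.
by rewrite negb_imply => /andP[Pj /negPf bj]; rewrite (bigD1 j) //= bj mul0r.
Qed.

Lemma pblock_tperm (T : finType) (Q : {set {set T}}) (t t' c : T) :
  pblock Q t = pblock Q t' -> pblock Q (tperm t t' c) = pblock Q c.
Proof. by move=> tt'; case: tpermP => // ->. Qed.

Lemma lumpable_sum_blockwise (R : numDomainType) (T : finType)
    (p : T -> T -> R) (Q : {set {set T}}) (G : T -> R) :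
    is_lumping p Q -> (forall t t', pblock Q t = pblock Q t' -> G t = G t') ->
  forall a b, pblock Q a = pblock Q b ->
  \sum_t p a t * G t = \sum_t p b t * G t.
Proof.
move=> [/and3P[/eqP coverQ trivQ nQ0] lumpQ] G_block a b ab.
have inQ t : pblock Q t \in Q by rewrite pblock_mem // coverQ inE.
have in_block t : t \in pblock Q t by rewrite mem_pblock coverQ inE.
have by_blocks c : \sum_t p c t * G t =
    \sum_(B in Q) (\sum_(t in B) p c t) * G (odflt a [pick t in B]).
  rewrite (partition_big (pblock Q) (mem Q)) //=; apply: eq_bigr => B QB.
  have pickB : odflt a [pick t in B] \in B.
    case: pickP => [//|B0]; case/negP: nQ0; suff <- : B = set0 by [].
    by apply/setP => t; rewrite inE B0.
  rewrite big_distrl; apply: eq_big => t.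
    by apply/eqP/idP => [<- // | tB]; exact: def_pblock.
  move=> /eqP tB; congr (_ * _); apply: G_block.
  by rewrite tB (def_pblock trivQ QB pickB).
rewrite !by_blocks; apply: eq_bigr => B QB; congr (_ * _).
by apply: (lumpQ _ _ (inQ a) QB); rewrite // ab.
Qed.

Section CoordinateTransposition.

Variables (I : finType) (X : I -> finType).
Implicit Types (S : pred I) (a b : forall j, X j) (z : prodX X).

Definition swap_on (S : pred I) (a b : forall j, X j) (z : prodX X) : prodX X :=
  [ffun j => if S j then tperm (a j) (b j) (z j) else z j].

Lemma swap_on_in S a b z j : S j -> swap_on S a b z j = tperm (a j) (b j) (z j).
Proof. by rewrite ffunE => ->. Qed.

Lemma swap_on_out S a b z j : ~~ S j -> swap_on S a b z j = z j.
Proof. by rewrite ffunE => /negPf->. Qed.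

Lemma swap_onK S a b : involutive (swap_on S a b).
Proof. by move=> z; apply/ffunP => j; rewrite !ffunE; case: (S j); rewrite ?tpermK. Qed.

End CoordinateTransposition.

Section ProductLumping.

Variables (I : finType) (prec : rel I).
Hypotheses (prec_refl : reflexive prec) (prec_anti : antisymmetric prec)
  (prec_trans : transitive prec).

Lemma sprec_up_proper j k :
  sprec prec j k -> [set l | sprec prec k l] \proper [set l | sprec prec j l].
Proof.
move=> /andP[jk nkj]; apply/properP; split.
  apply/subsetP => l; rewrite !inE => /andP[kl nlk].
  rewrite /sprec (prec_trans jk kl); apply/eqP => jl; subst l.
  by case/eqP: nkj; apply: prec_anti; rewrite jk kl.
by exists k; rewrite !inE /sprec ?eqxx ?andbF ?jk.
Qed.

Lemma sprec_up_ind (Q : I -> Prop) :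
  (forall k, (forall j, sprec prec k j -> Q j) -> Q k) -> forall k, Q k.
Proof.
move=> IH k; have [n] := ubnP #|[set l | sprec prec k l]|.
elim: n k => // n IHn k ltk; apply: IH => j kj; apply: IHn.
by rewrite ltnS in ltk; apply: leq_trans (proper_card (sprec_up_proper kj)) ltk.
Qed.

Variables (X : I -> finType) (Phi : forall i, prodX X -> {set {set X i}}).
Hypotheses
  (Phi_dep : forall i (x y : prodX X),
     (forall j, sprec prec i j -> x j = y j) -> Phi i x = Phi i y)
  (Phi_comp : forall i (x y : prodX X),
     (forall j, sprec prec i j ->
        Phi j x = Phi j y /\ pblock (Phi j x) (x j) = pblock (Phi j x) (y j)) ->
     Phi i x = Phi i y).
Implicit Types (a w x y z : prodX X).

Lemma approxP x y :
  reflect (forall i, Phi i x = Phi i y /\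
                     pblock (Phi i x) (x i) = pblock (Phi i x) (y i))
          (approx Phi x y).
Proof.
apply: (iffP forallP) => xy i; first by case/andP: (xy i) => /eqP-> /eqP->.
by case: (xy i) => -> ->; rewrite !eqxx.
Qed.

Lemma approx_sym x y : approx Phi x y -> approx Phi y x.
Proof. by move=> /approxP xy; apply/approxP => i; case: (xy i) => <- <-. Qed.

Lemma approx_trans x y z : approx Phi x y -> approx Phi y z -> approx Phi x z.
Proof.
move=> /approxP xy /approxP yz; apply/approxP => i.
by case: (xy i) (yz i) => <- -> [<- <-].
Qed.

Lemma approx_class_closed w z (z' : prodX X) : approx Phi z z' ->
  (z \in [set u | approx Phi w u]) = (z' \in [set u | approx Phi w u]).
Proof.
move=> zz'; rewrite !inE; apply/idP/idP => [wz | wz'].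
  exact: approx_trans wz zz'.
exact: approx_trans wz' (approx_sym zz').
Qed.

(* The partitions themselves agree, by induction from the top of the poset
   through [Phi_comp]. *)
Lemma approx_blockwise z (z' : prodX X) :
  (forall j, pblock (Phi j z) (z j) = pblock (Phi j z) (z' j)) -> approx Phi z z'.
Proof.
move=> zz'; have Phi_eq : forall k, Phi k z = Phi k z'.
  by apply: sprec_up_ind => k IH; apply: Phi_comp => j /IH.
by apply/approxP => i; split; [exact: Phi_eq | exact: zz'].
Qed.

Definition agree_outside i (a z : prodX X) : bool :=
  [forall j, ~~ prec j i ==> (a j == z j)].

Lemma agree_outsideP i a z :
  reflect (forall j, ~~ prec j i -> a j = z j) (agree_outside i a z).
Proof.
apply: (iffP forallP) => az j; last by apply/implyP => /az->.
by move/(implyP (az j))/eqP.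
Qed.

Lemma Phi_agree_outside i k a z :
  agree_outside i a z -> ~~ sprec prec k i -> Phi k a = Phi k z.
Proof.
move=> /agree_outsideP az nki; apply: Phi_dep => l /andP[kl nlk]; apply: az.
apply: contra nki => li; rewrite /sprec (prec_trans kl li).
by apply/eqP => ki; subst k; case/eqP: nlk; apply: prec_anti; rewrite kl li.
Qed.

Lemma agree_outside_swap_on i (S : pred I) a u v z :
  {subset S <= [pred j | prec j i]} ->
  agree_outside i a (swap_on S u v z) = agree_outside i a z.
Proof.
move=> Si; apply: eq_forallb => j; case: (boolP (prec j i)) => //= nji.
by rewrite swap_on_out //; apply: contra nji => /Si.
Qed.

Lemma agree_outside_swap_off i x y z :
  agree_outside i x (swap_on [pred j | ~~ prec j i] y x z) = agree_outside i y z.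
Proof.
apply: eq_forallb => j; case: (boolP (prec j i)) => //= nji.
by rewrite swap_on_in // eq_sym (can2_eq (tpermK _ _) (tpermK _ _)) tpermR eq_sym.
Qed.

Section ClassSums.

Variable S : {set prodX X}.
Hypothesis S_closed : forall z z', approx Phi z z' -> (z \in S) = (z' \in S).

Lemma sum_agree_outside_approx (R : pzSemiRingType) i (f : X i -> R) x y :
  approx Phi x y ->
  \sum_(z in S) f (z i) * (agree_outside i x z)%:R =
  \sum_(z in S) f (z i) * (agree_outside i y z)%:R.
Proof.
move=> /approxP xy; set h := swap_on [pred j | ~~ prec j i] y x.
have hK : involutive h := swap_onK _ y x.
rewrite (reindex_inj (can_inj hK)) big_mkcond [RHS]big_mkcond; apply: eq_bigr => z _.
rewrite agree_outside_swap_off swap_on_out /= ?prec_refl //.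
case: (boolP (agree_outside i y z)) => [yz | _]; last first.
  by rewrite mulr0n mulr0; do 2!case: ifP.
suff hz_z : approx Phi (h z) z by rewrite (S_closed hz_z).
have xhz : agree_outside i x (h z) by rewrite agree_outside_swap_off.
apply: approx_blockwise => j; case: (boolP (prec j i)) => [ji | nji].
  by rewrite swap_on_out //= ji.
move/agree_outsideP: yz => /(_ j nji) yzj.
rewrite swap_on_in // -yzj tpermL -(Phi_agree_outside xhz) ?(xy j).2 //.
by apply: contra nji => /andP[].
Qed.

Lemma sum_agree_outside_lumpable (R : numDomainType) i (p : X i -> X i -> R) y
    (a b : X i) :
  is_lumping p (Phi i y) -> pblock (Phi i y) a = pblock (Phi i y) b ->
  \sum_(z in S) p a (z i) * (agree_outside i y z)%:R =
  \sum_(z in S) p b (z i) * (agree_outside i y z)%:R.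
Proof.
set fiber := fun t => [set z in S | agree_outside i y z & z i == t].
have by_fibers c : \sum_(z in S) p c (z i) * (agree_outside i y z)%:R =
    \sum_t p c t * #|fiber t|%:R.
  rewrite big_mkcond (partition_big (fun z : prodX X => z i) predT) //=.
  apply: eq_bigr => t _; rewrite -sum1_card natr_sum mulr_sumr.
  rewrite big_mkcond [RHS]big_mkcond; apply: eq_bigr => z _; rewrite !inE.
  by case: eqP => [-> | _]; case: (z \in S); case: agree_outside;
    rewrite ?andbF ?mulr1 ?mulr0n ?mulr0.
move=> lump_y ab; rewrite !by_fibers; apply: lumpable_sum_blockwise ab => // t t' tt'.
set h := swap_on (pred1 i) (dfwith y t) (dfwith y t').
have hK : involutive h := swap_onK _ _ _.
have hi z : h z i = tperm t t' (z i) by rewrite swap_on_in //= !dfwith_in.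
rewrite -(card_preimset (fiber t) (can_inj hK)); congr _%:R.
apply: eq_card => z; rewrite !inE agree_outside_swap_on; last first.
  by move=> j /eqP->; exact: prec_refl.
rewrite hi (can2_eq (tpermK t t') (tpermK t t')) tpermL.
case: (boolP (agree_outside i y z)) => [yz | _]; last by rewrite !andbF.
congr (_ && _); apply: S_closed; apply: approx_blockwise => j.
case: (eqVneq j i) => [-> | ji]; last by rewrite swap_on_out //= ji.
have yhz : agree_outside i y (h z).
  by rewrite agree_outside_swap_on // => k /eqP->; exact: prec_refl.
have not_below_i : ~~ sprec prec i i by rewrite /sprec eqxx andbF.
by rewrite hi -(Phi_agree_outside yhz not_below_i) pblock_tperm.
Qed.

Lemma sum_agree_outside_class (R : numDomainType) i (p : X i -> X i -> R) x y :
  is_lumping p (Phi i y) -> approx Phi x y ->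
  \sum_(z in S) p (x i) (z i) * (agree_outside i x z)%:R =
  \sum_(z in S) p (y i) (z i) * (agree_outside i y z)%:R.
Proof.
move=> lump_y xy; rewrite (sum_agree_outside_approx _ xy).
apply: sum_agree_outside_lumpable lump_y _.
by move/approxP: xy => /(_ i) [<-].
Qed.

End ClassSums.

Lemma crested_sum (R : numFieldType) (p0 : I -> R) (P : forall i, X i -> X i -> R)
    (S : {set prodX X}) x :
  \sum_(z in S) crested prec p0 P x z =
  \sum_i p0 i * (\prod_(j | sprec prec j i) (#|X j|%:R)^-1) *
         \sum_(z in S) P i (x i) (z i) * (agree_outside i x z)%:R.
Proof.
rewrite exchange_big; apply: eq_bigr => i _; rewrite mulr_sumr.
by apply: eq_bigr => z _; rewrite prodr_natb [RHS]mulrA (mulrAC (p0 i)).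
Qed.

End ProductLumping.

Theorem theorem7 (R : realFieldType) (I : finType) (prec : rel I)
  (prec_refl : reflexive prec) (prec_anti : antisymmetric prec)
  (prec_trans : transitive prec)
  (X : I -> finType) (HX : forall i, (1 < #|X i|)%N)
  (P : forall i, X i -> X i -> R) (HP : forall i, stochastic (P i))
  (p0 : I -> R) (Hp0 : forall i, 0 < p0 i) (Hp0s : \sum_(i : I) p0 i = 1)
  (Phi : forall i, prodX X -> {set {set X i}})
  (HPhi_dep : forall i (x y : prodX X),
     (forall j, sprec prec i j -> x j = y j) -> Phi i x = Phi i y)
  (HPhi_lump : forall i (x : prodX X), is_lumping (P i) (Phi i x))
  (HPhi_comp : forall i (x y : prodX X),
     (forall j, sprec prec i j ->
        Phi j x = Phi j y /\ pblock (Phi j x) (x j) = pblock (Phi j x) (y j)) ->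
     Phi i x = Phi i y) :
  lumpable (crested prec p0 P) (prod_lumping Phi).
Proof.
move=> _ _ /imsetP[x0 _ ->] /imsetP[w _ ->] x y; rewrite !inE => x0x x0y.
have xy : approx Phi x y := approx_trans (approx_sym x0x) x0y.
have S_closed := @approx_class_closed _ _ Phi w.
rewrite !crested_sum; apply: eq_bigr => i _; congr (_ * _).
exact: (sum_agree_outside_class prec_refl prec_anti prec_trans HPhi_dep HPhi_comp
          S_closed (HPhi_lump i y) xy).
Qed.
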